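(* Let $y_{\min}>0$ and suppose $0\le v\le y_{\min}\sum_{i=1}^{n^-}h^-_i$. Then there exist integers $\ell_1,\ell_2$ with $0\le\ell_1<\ell_2\le n^-$ such that, setting $Y:=\dfrac{v-y_{\min}\sum_{i=1}^{\ell_1}h^-_i}{\sum_{i=\ell_1+1}^{\ell_2}h^-_i}$, one has $0\le Y\le y_{\min}$ and the vector $y$ with $y_i=y_{\min}$ for $1\le i\le\ell_1$, $y_i=Y$ for $\ell_1+1\le i\le\ell_2$, and $y_i=0$ for $\ell_2+1\le i\le n^-$ is an optimal solution of $$\min_{y\in\mathbb{R}^{n^-}}\ -\sum_{i=1}^{n^-}\left(\frac{y_i}{\lambda}\right)^{1/\beta}\quad\text{s.t.}\quad y_{\min}\ge y_1\ge\cdots\ge y_{n^-}\ge 0,\qquad\sum_{i=1}^{n^-}h^-_iy_i=v.$$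
   Context: Fix $N\in\mathbb{N}$, $\beta\in(0,1)$, $\lambda>0$, and an integer $1\le n^-\le N$. A function $f:[0,1]\to\mathbb{R}$ is inverse S-shaped if it is strictly increasing, continuously differentiable, and there is $x_0\in[0,1]$ such that $f'$ is strictly decreasing on $[0,x_0]$ and strictly increasing on $[x_0,1]$. Let $W^-:[0,1]\to[0,1]$ be inverse S-shaped with $W^-(0)=0$, $W^-(1)=1$, and $h^-_i:=W^-\!\left(\frac{i}{N}\right)-W^-\!\left(\frac{i-1}{N}\right)$ for $i=1,\dots,n^-$. *)

From Stdlib Require Import Reals Lra List.
Open Scope R_scope.

(* Sum of f i for a <= i <= b (empty, i.e. 0, when b < a). *)
Definition sum_range (f : nat -> R) (a b : nat) : R :=
  fold_right (fun i acc => f i + acc) 0 (seq a (S b - a)).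

(* Real power x^a for x >= 0, with the convention 0^a = 0 (a > 0). Stdlib's
   Rpower would give Rpower 0 a = 1, so we guard the case x <= 0. *)
Definition rpow (x a : R) : R :=
  if Rle_dec x 0 then 0 else Rpower x a.

Definition has_deriv01 (f : R -> R) (x df : R) : Prop :=
  limit1_in (fun y => (f y - f x) / (y - x))
            (fun y => 0 <= y <= 1 /\ y <> x) df x.

Definition strictly_increasing_on (f : R -> R) (a b : R) : Prop :=
  forall x y, a <= x <= b -> a <= y <= b -> x < y -> f x < f y.

Definition strictly_decreasing_on (f : R -> R) (a b : R) : Prop :=
  forall x y, a <= x <= b -> a <= y <= b -> x < y -> f y < f x.

Definition inverse_S_shaped (f : R -> R) : Prop :=
  strictly_increasing_on f 0 1 /\
  exists f' : R -> R,
    (forall x, 0 <= x <= 1 -> has_deriv01 f x (f' x)) /\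
    (forall x, 0 <= x <= 1 ->
       limit1_in f' (fun y => 0 <= y <= 1) (f' x) x) /\
    exists x0, 0 <= x0 <= 1 /\
      strictly_decreasing_on f' 0 x0 /\ strictly_increasing_on f' x0 1.

Definition hminus (W : R -> R) (N : nat) (i : nat) : R :=
  W (INR i / INR N) - W (INR (i - 1) / INR N).

Definition feasible (W : R -> R) (N n : nat) (ymin v : R) (y : nat -> R) : Prop :=
  ymin >= y 1%nat /\
  (forall i, (1 <= i < n)%nat -> y i >= y (S i)) /\
  y n >= 0 /\
  sum_range (fun i => hminus W N i * y i) 1 n = v.

Definition objective (n : nat) (beta lambda : R) (y : nat -> R) : R :=
  - sum_range (fun i => rpow (y i / lambda) (1 / beta)) 1 n.

Definition optimal (W : R -> R) (N n : nat) (beta lambda ymin v : R)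
  (y : nat -> R) : Prop :=
  feasible W N n ymin v y /\
  forall z, feasible W N n ymin v z ->
    objective n beta lambda y <= objective n beta lambda z.

From Stdlib Require Import Reals Lra Lia List Classical.
Open Scope R_scope.

(* With p = 1/beta > 1 the problem maximises the convex function
   F(y) = sum_i (y_i/lambda)^p over the polytope cut out by the constraints.
   A feasible y is a convex combination sum_k mu_k e_k of the step vectors
   e_k = ymin * 1_{i <= k} (k = 0..n), and the points (c_k, L(e_k)), with
   c_k = sum_i h_i (e_k)_i increasing and L the tangent affine function of F
   at y, have barycentre (v, F(y)).  Such a barycentre lies below the chord
   joining two of these points with c_a <= v <= c_b; that chord's value at v
   is L at the vertex with l1 = a, l2 = b, and L <= F by convexity.  Hence F
   is maximised at one of the finitely many vertices, and the best one is
   optimal. *)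

Fixpoint psum (f : nat -> R) (n : nat) : R :=
  match n with O => 0 | S k => psum f k + f (S k) end.

Lemma fold_right_seq_psum (f : nat -> R) d a :
  fold_right (fun i acc => f i + acc) 0 (seq (S a) d) = psum f (a + d) - psum f a.
Proof.
  revert a; induction d as [|d IH]; intros a; simpl.
  - rewrite Nat.add_0_r; ring.
  - rewrite IH, Nat.add_succ_r; simpl; ring.
Qed.

Lemma sum_range_psum (f : nat -> R) a b :
  (a <= b)%nat -> sum_range f (S a) b = psum f b - psum f a.
Proof.
  intros Hab; unfold sum_range.
  replace (S b - S a)%nat with (b - a)%nat by lia.
  rewrite fold_right_seq_psum; do 2 f_equal; lia.
Qed.

Lemma sum_range_1 (f : nat -> R) n : sum_range f 1 n = psum f n.
Proof. rewrite (sum_range_psum f 0 n) by lia; simpl; ring. Qed.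

Lemma psum_ext (f g : nat -> R) n :
  (forall i, (1 <= i <= n)%nat -> f i = g i) -> psum f n = psum g n.
Proof.
  induction n as [|n IH]; intros Hfg; simpl; [reflexivity|].
  rewrite IH, Hfg; [reflexivity | lia | intros; apply Hfg; lia].
Qed.

Lemma psum_le (f g : nat -> R) n :
  (forall i, (1 <= i <= n)%nat -> f i <= g i) -> psum f n <= psum g n.
Proof.
  induction n as [|n IH]; intros Hfg; simpl; [lra|].
  apply Rplus_le_compat; [apply IH; intros; apply Hfg | apply Hfg]; lia.
Qed.

Lemma psum_plus (f g : nat -> R) n : psum (fun i => f i + g i) n = psum f n + psum g n.
Proof. induction n as [|n IH]; simpl; [ring | rewrite IH; ring]. Qed.

Lemma psum_minus (f g : nat -> R) n : psum (fun i => f i - g i) n = psum f n - psum g n.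
Proof. induction n as [|n IH]; simpl; [ring | rewrite IH; ring]. Qed.

Lemma psum_scal (c : R) (f : nat -> R) n : psum (fun i => c * f i) n = c * psum f n.
Proof. induction n as [|n IH]; simpl; [ring | rewrite IH; ring]. Qed.

Lemma psum_lt (f : nat -> R) n a b :
  (forall i, (1 <= i <= n)%nat -> 0 < f i) -> (a < b <= n)%nat -> psum f a < psum f b.
Proof.
  intros Hf; induction b as [|b IH]; intros Hab; [lia|]; simpl.
  assert (0 < f (S b)) by (apply Hf; lia).
  destruct (Nat.eq_dec a b) as [->|]; [lra|].
  assert (psum f a < psum f b) by (apply IH; lia); lra.
Qed.

Lemma psum_prefix (g : nat -> R) c k m :
  psum (fun i => g i * (if (i <=? k)%nat then c else 0)) m = c * psum g (Nat.min m k).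
Proof.
  induction m as [|m IH]; cbn [psum]; [simpl; ring|]; rewrite IH.
  destruct (Nat.leb_spec (S m) k).
  - rewrite (Nat.min_l (S m) k), (Nat.min_l m k) by lia; cbn [psum]; ring.
  - rewrite (Nat.min_r (S m) k), (Nat.min_r m k) by lia; ring.
Qed.

Lemma psum_sum_f_R0_comm (A : nat -> nat -> R) m n :
  psum (fun i => sum_f_R0 (fun k => A k i) m) n = sum_f_R0 (fun k => psum (A k) n) m.
Proof.
  induction m as [|m IH]; simpl; [reflexivity|].
  rewrite psum_plus, IH; reflexivity.
Qed.

Lemma sum_f_R0_telescope_from (zeta : nat -> R) i m :
  sum_f_R0 (fun k => if (i <=? k)%nat then zeta k - zeta (S k) else 0) m =
  if (i <=? m)%nat then zeta i - zeta (S m) else 0.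
Proof.
  induction m as [|m IH]; simpl.
  - destruct (Nat.leb_spec i 0); [replace i with 0%nat by lia|]; reflexivity.
  - rewrite IH; destruct (Nat.leb_spec i m), (Nat.leb_spec i (S m)); try lia; try ring.
    replace i with (S m) by lia; ring.
Qed.

Lemma argmax_in_list {A : Type} (P : A -> Prop) (G : A -> R) (l : list A) :
  (exists x, In x l /\ P x) ->
  exists x, In x l /\ P x /\ forall y, In y l -> P y -> G y <= G x.
Proof.
  induction l as [|a l IH]; intros [x [Hx Px]]; [destruct Hx|].
  destruct (classic (exists x, In x l /\ P x)) as [Hl | Hl].
  - destruct (IH Hl) as (m & Hm & Pm & Gm).
    destruct (classic (P a /\ G m <= G a)) as [[Pa Ga] | Ha].
    + exists a; split; [left; reflexivity|]; split; [exact Pa|].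
      intros y [<- | Hy] Py; [lra | specialize (Gm y Hy Py); lra].
    + exists m; split; [right; exact Hm|]; split; [exact Pm|].
      intros y [-> | Hy] Py; [|exact (Gm y Hy Py)].
      destruct (Rle_dec (G y) (G m)) as [|Hlt]; [assumption|].
      exfalso; apply Ha; split; [exact Py | lra].
  - destruct Hx as [<- | Hx]; [|exfalso; apply Hl; exists x; auto].
    exists a; split; [left; reflexivity|]; split; [exact Px|].
    intros y [-> | Hy] Py; [lra | exfalso; apply Hl; exists y; auto].
Qed.

Lemma exists_lower_bound (f : nat -> R) n : exists m, forall k, (k <= n)%nat -> m <= f k.
Proof.
  induction n as [|n [m Hm]].
  - exists (f 0%nat); intros k Hk; replace k with 0%nat by lia; lra.
  - exists (Rmin m (f (S n))); intros k Hk.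
    destruct (Nat.eq_dec k (S n)) as [->|]; [apply Rmin_r|].
    apply Rle_trans with m; [apply Rmin_l | apply Hm; lia].
Qed.

Lemma ln_sub_le x y : 0 < x -> 0 < y -> ln x - ln y <= x / y - 1.
Proof.
  intros Hx Hy; pose proof (exp_ineq1_le (ln x - ln y)) as H.
  unfold Rminus in H; rewrite exp_plus, exp_Ropp, !exp_ln in H by assumption.
  unfold Rdiv; lra.
Qed.

Lemma ln_concave w a b :
  0 <= w <= 1 -> 0 < a -> 0 < b -> w * ln a + (1 - w) * ln b <= ln (w * a + (1 - w) * b).
Proof.
  intros Hw Ha Hb; set (m := w * a + (1 - w) * b).
  assert (Hm : 0 < m) by (unfold m; nra).
  pose proof (ln_sub_le a m Ha Hm); pose proof (ln_sub_le b m Hb Hm).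
  assert (w * (a / m - 1) + (1 - w) * (b / m - 1) = 0) by (unfold m in *; field; lra).
  nra.
Qed.

Lemma Rpower_bernoulli t p : 0 < t -> 1 <= p -> 1 + p * (t - 1) <= Rpower t p.
Proof.
  intros Ht Hp; set (T := Rpower t p).
  assert (HT : 0 < T) by apply exp_pos.
  set (A := / p * T + (1 - / p) * 1).
  assert (Hw : 0 <= / p <= 1).
  { split; [left; apply Rinv_0_lt_compat; lra|].
    rewrite <- Rinv_1; apply Rinv_le_contravar; lra. }
  assert (HA : 0 < A) by (unfold A; nra).
  assert (Hln : ln t <= ln A).
  { pose proof (ln_concave (/ p) T 1 Hw HT Rlt_0_1) as Hc.
    unfold T in Hc; rewrite ln_Rpower, ln_1 in Hc.
    fold T A in Hc; replace (/ p * (p * ln t)) with (ln t) in Hc by (field; lra); lra. }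
  assert (t <= A).
  { destruct (Rle_lt_dec t A) as [|Hlt]; [assumption|].
    pose proof (ln_increasing A t HA Hlt); lra. }
  assert (p * A = T + p - 1) by (unfold A; field; lra).
  nra.
Qed.

Lemma rpow_nonneg x a : 0 <= rpow x a.
Proof. unfold rpow; destruct (Rle_dec x 0); [lra | left; apply exp_pos]. Qed.

Lemma rpow_tangent p u x :
  1 < p -> 0 <= u -> 0 <= x -> rpow u p + p * rpow u (p - 1) * (x - u) <= rpow x p.
Proof.
  intros Hp Hu Hx; unfold rpow at 1 2.
  (* At u = 0 the slope p * rpow u (p - 1) vanishes by the convention rpow 0 _ = 0. *)
  destruct (Rle_dec u 0) as [Hu0 | Hu0].
  { pose proof (rpow_nonneg x p); lra. }
  set (U := Rpower u p).
  assert (HU : 0 < U) by apply exp_pos.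
  assert (EU : Rpower u (p - 1) = U / u).
  { unfold U; replace p with (p - 1 + 1) at 2 by ring.
    rewrite Rpower_plus, Rpower_1 by lra; field; lra. }
  rewrite EU; unfold rpow; destruct (Rle_dec x 0) as [Hx0 | Hx0].
  - replace x with 0 by lra.
    replace (U + p * (U / u) * (0 - u)) with (U * (1 - p)) by (field; lra); nra.
  - replace x with (u * (x / u)) at 2 by (field; lra).
    rewrite <- Rpower_mult_distr by (try apply Rdiv_lt_0_compat; lra); fold U.
    pose proof (Rpower_bernoulli (x / u) p ltac:(apply Rdiv_lt_0_compat; lra) ltac:(lra)).
    replace (U + p * (U / u) * (x - u)) with (U * (1 + p * (x / u - 1))) by (field; lra).
    apply Rmult_le_compat_l; lra.
Qed.

Lemma supporting_slope n (s r : nat -> R) :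
  (1 <= n)%nat ->
  (forall a b, (a < b <= n)%nat -> s a < s b) ->
  (forall a b, (a < b <= n)%nat -> s a <= 0 <= s b -> s b * r a <= s a * r b) ->
  exists alpha, forall k, (k <= n)%nat -> r k <= alpha * s k.
Proof.
  intros Hn Hs Hchord.
  assert (Hzero : forall k, (k <= n)%nat -> s k = 0 -> r k <= 0).
  { intros k Hk Hsk; destruct (Nat.lt_ge_cases k n).
    - pose proof (Hs k (S k) ltac:(lia)); pose proof (Hchord k (S k) ltac:(lia) ltac:(lra)).
      rewrite Hsk in *; nra.
    - replace k with n in * by lia.
      pose proof (Hs (n - 1)%nat n ltac:(lia)); pose proof (Hchord (n - 1)%nat n ltac:(lia) ltac:(lra)).
      rewrite Hsk in *; nra. }
  (* alpha is the largest slope r k / s k over s k > 0; the chord hypothesis puts the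
     points with s k < 0 below that line too.  If no s k is positive, any alpha below
     all the ratios works (they are junk only where s k = 0). *)
  destruct (classic (exists k, In k (seq 0 (S n)) /\ 0 < s k)) as [Hpos | Hnopos].
  - destruct (argmax_in_list (fun k => 0 < s k) (fun k => r k / s k) _ Hpos) as (m & Hm & Hsm & Hmax).
    apply in_seq in Hm; exists (r m / s m); intros k Hk.
    destruct (Rtotal_order (s k) 0) as [Hneg | [Hz | Hp]].
    + assert (Hkm : (k < m)%nat).
      { destruct (Nat.lt_ge_cases k m) as [|Hmk]; [assumption|].
        destruct (Nat.eq_dec m k) as [<-|]; [lra|].
        pose proof (Hs m k ltac:(lia)); lra. }
      pose proof (Hchord k m ltac:(lia) ltac:(lra)).
      replace (r k) with (s m * r k / s m) by (field; lra).
      replace (r m / s m * s k) with (s k * r m / s m) by (field; lra).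
      apply Rmult_le_compat_r; [left; apply Rinv_0_lt_compat|]; assumption.
    + rewrite Hz, Rmult_0_r; auto.
    + pose proof (Hmax k ltac:(apply in_seq; lia) Hp).
      replace (r k) with (r k / s k * s k) by (field; lra).
      apply Rmult_le_compat_r; lra.
  - destruct (exists_lower_bound (fun k => r k / s k) n) as [alpha Halpha].
    exists alpha; intros k Hk.
    destruct (Rtotal_order (s k) 0) as [Hneg | [Hz | Hp]].
    + replace (r k) with (s k * (r k / s k)) by (field; lra).
      rewrite (Rmult_comm alpha); apply Rmult_le_compat_neg_l; [lra | apply Halpha, Hk].
    + rewrite Hz, Rmult_0_r; auto.
    + exfalso; apply Hnopos; exists k; split; [apply in_seq; lia | assumption].
Qed.

Lemma weighted_sum_nonpos_of_chords n (mu s r : nat -> R) :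
  (1 <= n)%nat ->
  (forall a b, (a < b <= n)%nat -> s a < s b) ->
  (forall a b, (a < b <= n)%nat -> s a <= 0 <= s b -> s b * r a <= s a * r b) ->
  (forall k, 0 <= mu k) ->
  sum_f_R0 (fun k => mu k * s k) n = 0 ->
  sum_f_R0 (fun k => mu k * r k) n <= 0.
Proof.
  intros Hn Hs Hchord Hmu Hsum.
  destruct (supporting_slope n s r Hn Hs Hchord) as [alpha Halpha].
  apply Rle_trans with (alpha * sum_f_R0 (fun k => mu k * s k) n); [|rewrite Hsum; lra].
  rewrite scal_sum; apply sum_Rle; intros k Hk.
  specialize (Halpha k Hk); specialize (Hmu k); nra.
Qed.

Section StepVectors.

Variables (n : nat) (h : nat -> R) (ymin v : R).
Hypothesis n_pos : (1 <= n)%nat.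
Hypothesis h_pos : forall i, (1 <= i <= n)%nat -> 0 < h i.
Hypothesis ymin_pos : 0 < ymin.

Definition step (k i : nat) : R := if (i <=? k)%nat then ymin else 0.

Definition lin (g y : nat -> R) : R := psum (fun i => g i * y i) n.

Lemma lin_step g k : (k <= n)%nat -> lin g (step k) = ymin * psum g k.
Proof. intros Hk; unfold lin, step; rewrite psum_prefix, Nat.min_r by lia; reflexivity. Qed.

Definition level (a b : nat) : R := (v - ymin * psum h a) / (psum h b - psum h a).

Definition vertex (a b i : nat) : R :=
  if (i <=? a)%nat then ymin else if (i <=? b)%nat then level a b else 0.

Definition straddles (a b : nat) : Prop :=
  (a < b <= n)%nat /\ ymin * psum h a <= v <= ymin * psum h b.

Lemma vertex_combination a b i : (a < b <= n)%nat ->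
  vertex a b i * (ymin * psum h b - ymin * psum h a) =
  (ymin * psum h b - v) * step a i + (v - ymin * psum h a) * step b i.
Proof.
  intros Hab; pose proof (psum_lt h n a b h_pos Hab).
  unfold vertex, level, step.
  destruct (Nat.leb_spec i a), (Nat.leb_spec i b); try lia; field; lra.
Qed.

Lemma lin_vertex g a b : (a < b <= n)%nat ->
  lin g (vertex a b) * (ymin * psum h b - ymin * psum h a) =
  (ymin * psum h b - v) * lin g (step a) + (v - ymin * psum h a) * lin g (step b).
Proof.
  intros Hab; unfold lin.
  set (ca := ymin * psum h a); set (cb := ymin * psum h b).
  rewrite Rmult_comm, <- !psum_scal, <- psum_plus; apply psum_ext; intros i _.
  transitivity (g i * (vertex a b i * (cb - ca))); [ring|].
  unfold ca, cb; rewrite vertex_combination by exact Hab; ring.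
Qed.

Lemma level_bounds a b : straddles a b -> 0 <= level a b <= ymin.
Proof.
  intros [Hab Hv]; pose proof (psum_lt h n a b h_pos Hab); unfold level; split.
  - apply Rmult_le_pos; [lra | left; apply Rinv_0_lt_compat; lra].
  - apply Rmult_le_reg_r with (psum h b - psum h a); [lra|].
    unfold Rdiv; rewrite Rmult_assoc, Rinv_l by lra; lra.
Qed.

Lemma vertex_bounds a b i : straddles a b -> 0 <= vertex a b i <= ymin.
Proof.
  intros Hst; pose proof (level_bounds a b Hst).
  unfold vertex; destruct (i <=? a)%nat; [lra|]; destruct (i <=? b)%nat; lra.
Qed.

Lemma vertex_feasible a b : straddles a b ->
  ymin >= vertex a b 1 /\
  (forall i, (1 <= i < n)%nat -> vertex a b i >= vertex a b (S i)) /\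
  vertex a b n >= 0 /\ lin h (vertex a b) = v.
Proof.
  intros Hst; pose proof (vertex_bounds a b) as Hb; pose proof (proj1 Hst) as Hab.
  pose proof (psum_lt h n a b h_pos Hab).
  split; [|split; [|split]].
  - apply Rle_ge, Hb, Hst.
  - intros i Hi; pose proof (Hb i Hst); pose proof (Hb (S i) Hst); unfold vertex in *.
    destruct (Nat.leb_spec i a), (Nat.leb_spec (S i) a), (Nat.leb_spec i b), (Nat.leb_spec (S i) b);
      try lia; lra.
  - apply Rle_ge, Hb, Hst.
  - pose proof (lin_vertex h a b Hab) as E.
    rewrite !lin_step in E by lia.
    apply Rmult_eq_reg_r with (ymin * psum h b - ymin * psum h a); [rewrite E; ring | nra].
Qed.

Lemma step_mixture z :
  ymin >= z 1%nat -> (forall i, (1 <= i < n)%nat -> z i >= z (S i)) -> z n >= 0 ->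
  exists mu : nat -> R, (forall k, 0 <= mu k) /\ sum_f_R0 mu n = 1 /\
    forall i, (1 <= i <= n)%nat -> sum_f_R0 (fun k => mu k * step k i) n = z i.
Proof.
  intros Hz1 Hzdec Hzn.
  set (zeta k := if (k =? 0)%nat then ymin else if (k <=? n)%nat then z k else 0).
  assert (zeta_0 : zeta 0%nat = ymin) by reflexivity.
  assert (zeta_in : forall k, (1 <= k <= n)%nat -> zeta k = z k).
  { intros k Hk; unfold zeta; destruct (Nat.eqb_spec k 0), (Nat.leb_spec k n); try lia; reflexivity. }
  assert (zeta_out : forall k, (n < k)%nat -> zeta k = 0).
  { intros k Hk; unfold zeta; destruct (Nat.eqb_spec k 0), (Nat.leb_spec k n); try lia; reflexivity. }
  exists (fun k => (zeta k - zeta (S k)) / ymin); split; [|split].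
  - intros k; apply Rmult_le_pos; [|left; apply Rinv_0_lt_compat, ymin_pos].
    destruct (Nat.eq_dec k 0) as [->|]; [rewrite zeta_0, zeta_in by lia; lra|].
    destruct (Nat.lt_ge_cases k n); [rewrite !zeta_in by lia; pose proof (Hzdec k ltac:(lia)); lra|].
    destruct (Nat.eq_dec k n) as [->|]; [rewrite zeta_in, zeta_out by lia; lra|].
    rewrite !zeta_out by lia; lra.
  - rewrite (sum_eq _ (fun k => (if (0 <=? k)%nat then zeta k - zeta (S k) else 0) * / ymin))
      by reflexivity.
    rewrite <- scal_sum, sum_f_R0_telescope_from; cbn -[zeta].
    rewrite zeta_0, zeta_out by lia; field; lra.
  - intros i Hi.
    rewrite (sum_eq _ (fun k => if (i <=? k)%nat then zeta k - zeta (S k) else 0)).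
    2:{ intros k _; unfold step; destruct (i <=? k)%nat; field; lra. }
    rewrite sum_f_R0_telescope_from; destruct (Nat.leb_spec i n); [|lia].
    rewrite zeta_in, zeta_out by lia; ring.
Qed.

Lemma mixture_affine (mu z g : nat -> R) K :
  sum_f_R0 mu n = 1 ->
  (forall i, (1 <= i <= n)%nat -> sum_f_R0 (fun k => mu k * step k i) n = z i) ->
  sum_f_R0 (fun k => mu k * (lin g (step k) + K)) n = lin g z + K.
Proof.
  intros Hmu1 Hmix.
  rewrite (sum_eq _ (fun k => psum (fun i => mu k * (g i * step k i)) n + mu k * K)).
  2:{ intros k _; unfold lin; rewrite psum_scal; ring. }
  rewrite sum_plus, <- psum_sum_f_R0_comm, <- scal_sum, Hmu1, Rmult_1_r.
  f_equal; unfold lin; apply psum_ext; intros i Hi.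
  rewrite <- (Hmix i Hi), scal_sum; apply sum_eq; intros; ring.
Qed.

Definition pow_sum (lam p : R) (y : nat -> R) : R := psum (fun i => rpow (y i / lam) p) n.

Definition tangent_slope (lam p : R) (z : nat -> R) (i : nat) : R :=
  p * rpow (z i / lam) (p - 1) / lam.

Lemma pow_sum_tangent lam p z y : 0 < lam -> 1 < p ->
  (forall i, (1 <= i <= n)%nat -> 0 <= z i) -> (forall i, (1 <= i <= n)%nat -> 0 <= y i) ->
  pow_sum lam p z + (lin (tangent_slope lam p z) y - lin (tangent_slope lam p z) z) <=
  pow_sum lam p y.
Proof.
  intros Hlam Hp Hz Hy; unfold pow_sum, lin, tangent_slope.
  rewrite <- psum_minus, <- psum_plus; apply psum_le; intros i Hi.
  assert (Hinv : 0 < / lam) by (apply Rinv_0_lt_compat; lra).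
  pose proof (rpow_tangent p (z i / lam) (y i / lam) Hp
    ltac:(apply Rmult_le_pos; auto; lra) ltac:(apply Rmult_le_pos; auto; lra)).
  replace (y i / lam - z i / lam) with ((y i - z i) / lam) in * by (field; lra).
  unfold Rdiv in *; lra.
Qed.

Lemma vertex_dominates lam p M z : 0 < lam -> 1 < p ->
  (forall a b, straddles a b -> pow_sum lam p (vertex a b) <= M) ->
  ymin >= z 1%nat -> (forall i, (1 <= i < n)%nat -> z i >= z (S i)) -> z n >= 0 ->
  lin h z = v -> pow_sum lam p z <= M.
Proof.
  intros Hlam Hp HM Hz1 Hzdec Hzn Hzv.
  destruct (step_mixture z Hz1 Hzdec Hzn) as (mu & Hmu & Hmu1 & Hmix).
  assert (Hz : forall i, (1 <= i <= n)%nat -> 0 <= z i).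
  { intros i Hi; rewrite <- (Hmix i Hi); apply cond_pos_sum; intros k.
    apply Rmult_le_pos; [apply Hmu | unfold step; destruct (i <=? k)%nat; lra]. }
  set (g := tangent_slope lam p z); set (K := pow_sum lam p z - lin g z - M).
  enough (lin g z + K <= 0) by (unfold K in *; lra).
  rewrite <- (mixture_affine mu z g K Hmu1 Hmix).
  apply (weighted_sum_nonpos_of_chords n mu (fun k => lin h (step k) + - v)); [exact n_pos | | | exact Hmu | ].
  - intros a b Hab; rewrite !lin_step by lia.
    pose proof (psum_lt h n a b h_pos Hab); nra.
  - (* The chord of k |-> lin g (step k) + K between a and b has value
       lin g (vertex a b) + K at v (lin_vertex), and that is <= 0 by the tangent
       inequality at z and HM. *)
    intros a b Hab Hstr; rewrite !(lin_step h) in * by lia.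
    assert (Hst : straddles a b) by (split; [exact Hab | lra]).
    pose proof (pow_sum_tangent lam p z (vertex a b) Hlam Hp Hz
      (fun i _ => proj1 (vertex_bounds a b i Hst))) as Htangent; fold g in Htangent.
    pose proof (HM a b Hst); pose proof (lin_vertex g a b Hab) as E.
    assert (Hc : ymin * psum h a < ymin * psum h b)
      by (apply Rmult_lt_compat_l; [exact ymin_pos | exact (psum_lt h n a b h_pos Hab)]).
    assert (0 <= (ymin * psum h b - ymin * psum h a) * - (lin g (vertex a b) + K))
      by (apply Rmult_le_pos; unfold K; lra).
    lra.
  - rewrite (mixture_affine mu z h (- v) Hmu1 Hmix), Hzv; ring.
Qed.

Lemma exists_best_straddle (G : nat -> nat -> R) : 0 <= v <= ymin * psum h n ->
  exists a b, straddles a b /\ forall a' b', straddles a' b' -> G a' b' <= G a b.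
Proof.
  intros Hv; set (l := list_prod (seq 0 (S n)) (seq 0 (S n))).
  assert (Hl : forall a b, straddles a b -> In (a, b) l).
  { intros a b [Hab _]; apply in_prod; apply in_seq; lia. }
  destruct (argmax_in_list (fun ab => straddles (fst ab) (snd ab)) (fun ab => G (fst ab) (snd ab)) l)
    as ([a b] & _ & Hst & Hmax).
  { assert (H0n : straddles 0 n) by (split; [lia | simpl; lra]).
    exists (0%nat, n); split; [apply Hl|]; exact H0n. }
  exists a, b; split; [exact Hst|].
  intros a' b' Hst'; exact (Hmax (a', b') (Hl a' b' Hst') Hst').
Qed.

End StepVectors.

Lemma hminus_pos W N nm : (1 <= nm <= N)%nat -> strictly_increasing_on W 0 1 ->
  forall i, (1 <= i <= nm)%nat -> 0 < hminus W N i.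
Proof.
  intros Hnm Hinc i Hi; unfold hminus.
  assert (HN : 0 < / INR N) by (apply Rinv_0_lt_compat, lt_0_INR; lia).
  assert (Hlo : 0 <= INR (i - 1) / INR N) by (apply Rmult_le_pos; [apply pos_INR | lra]).
  assert (Hhi : INR i / INR N <= 1).
  { replace 1 with (INR N / INR N) by (field; apply not_0_INR; lia).
    apply Rmult_le_compat_r; [lra | apply le_INR; lia]. }
  assert (Hlt : INR (i - 1) / INR N < INR i / INR N).
  { apply Rmult_lt_compat_r; [exact HN | apply lt_INR; lia]. }
  pose proof (Hinc (INR (i - 1) / INR N) (INR i / INR N) ltac:(lra) ltac:(lra) Hlt); lra.
Qed.

Theorem proposition3 (N : nat) (beta lambda : R) (nm : nat) (W : R -> R)
  (ymin v : R) :
  0 < beta < 1 -> 0 < lambda ->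
  (1 <= nm <= N)%nat ->
  (forall x, 0 <= x <= 1 -> 0 <= W x <= 1) ->
  inverse_S_shaped W -> W 0 = 0 -> W 1 = 1 ->
  0 < ymin ->
  0 <= v <= ymin * sum_range (hminus W N) 1 nm ->
  exists l1 l2 : nat,
    (l1 < l2 <= nm)%nat /\
    let Y := (v - ymin * sum_range (hminus W N) 1 l1)
             / sum_range (hminus W N) (S l1) l2 in
    0 <= Y <= ymin /\
    optimal W N nm beta lambda ymin v
      (fun i => if Nat.leb i l1 then ymin
                else if Nat.leb i l2 then Y else 0).
Proof.
  intros Hbeta Hlam Hnm _ [Hinc _] _ _ Hymin Hv.
  set (h := hminus W N); rewrite sum_range_1 in Hv.
  assert (h_pos := hminus_pos W N nm Hnm Hinc).
  assert (Hp : 1 < 1 / beta).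
  { unfold Rdiv; rewrite Rmult_1_l, <- Rinv_1; apply Rinv_lt_contravar; lra. }
  destruct (exists_best_straddle nm h ymin v ltac:(lia)
              (fun a b => pow_sum nm lambda (1 / beta) (vertex h ymin v a b)) Hv)
    as (a & b & Hst & Hbest).
  exists a, b; split; [apply Hst|]; cbv zeta.
  rewrite sum_range_1, sum_range_psum by (destruct Hst; lia).
  split; [apply (level_bounds nm h ymin v); assumption | split].
  - unfold feasible; rewrite sum_range_1.
    apply (vertex_feasible nm h ymin v); auto; lia.
  - intros z (Hz1 & Hzdec & Hzn & Hzv); unfold objective; rewrite !sum_range_1.
    apply Ropp_le_contravar.
    apply (vertex_dominates nm h ymin v); auto; [lia | now rewrite sum_range_1 in Hzv].
Qed.
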